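(* Let $\Sigma,\Gamma$ be finite alphabets, $k>0$, $f:\Sigma^*\to\Gamma^*$, and $\tau$ a tier on $\Sigma\cup\Gamma$. If $f$ is $k$-TISL on tier $\tau$, then there is a tier $\upsilon$ on $\Sigma\times\Gamma^*$ such that $f$ is $k$-TSSL on tier $\upsilon$. Likewise, if $f$ is $k$-TOSL on tier $\tau$, then there is a tier $\varphi$ on $\Sigma\times\Gamma^*$ such that $f$ is $k$-TSSL on tier $\varphi$.
   Context: Strings: $\lambda$ is the empty string; $\rtimes$ is a boundary symbol not in any alphabet. For $m\ge0$, $\mathrm{suff}^m(x)$ is the string of the last $m$ symbols of $\rtimes^mx$. $\mathrm{lcp}(A)$ is the longest common prefix of a set of strings $A$. For $f:\Sigma^*\to\Gamma^*$: $f^{\gets}(x):=\mathrm{lcp}(\{f(xy)\mid y\in\Sigma^*\})$, and $f^{\to}_x$ is defined by $f(xy)=f^{\gets}(x)f^{\to}_x(y)$. A tier on a (possibly infinite) alphabet $A$ is a homomorphism $\tau:A^*\to A^*$ with $\tau(a)\in\{a,\lambda\}$ for each $a\in A$. Given $i,j>0$ and a tier $\tau$ on $\Sigma\cup\Gamma$, $f$ is $i,j$-TIOSL on $\tau$ if for all $w,x\in\Sigma^*$, $\mathrm{suff}^{i-1}(\tau(w))=\mathrm{suff}^{i-1}(\tau(x))$ and $\mathrm{suff}^{j-1}(\tau(f^{\gets}(w)))=\mathrm{suff}^{j-1}(\tau(f^{\gets}(x)))$ imply $f^{\to}_w=f^{\to}_x$. $f$ is $k$-TISL on $\tau$ if it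 is $k,1$-TIOSL on $\tau$, and $k$-TOSL on $\tau$ if it is $1,k$-TIOSL on $\tau$. Actions of $f$: $\mathbb{A}_f:=\{\langle x,y\rangle\in\Sigma\times\Gamma^*\mid\exists z\in\Sigma^*.\ f^{\gets}(zx)=f^{\gets}(z)y\}$, written $x:y$. The run $f^{\Leftarrow}(x)\in\mathbb{A}_f^*$: if $|x|\le1$, $f^{\Leftarrow}(x):=x:f^{\gets}(x)$; if $x=yz$ with $|y|\ge1$, $|z|=1$, then $f^{\Leftarrow}(x):=f^{\Leftarrow}(y)(z:w)$ where $f^{\gets}(x)=f^{\gets}(y)w$. For a tier $\upsilon$ on $\Sigma\times\Gamma^*$, $f$ is $k$-TSSL on $\upsilon$ if for all $x,y\in\Sigma^*$, $\mathrm{suff}^{k-1}(\upsilon(f^{\Leftarrow}(x)))=\mathrm{suff}^{k-1}(\upsilon(f^{\Leftarrow}(y)))$ implies $f^{\to}_x=f^{\to}_y$. *)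

From mathcomp Require Import all_boot.
From mathcomp Require Import boolp.
Set Implicit Arguments. Unset Strict Implicit. Unset Printing Implicit Defensive.

(* suff^m(x): last m symbols of (boundary^m x); None plays the boundary symbol *)
Definition suff {T : Type} (m : nat) (x : seq T) : seq (option T) :=
  drop (size x) (nseq m None ++ map Some x).

(* longest common prefix of a set A of strings, given a member a of A:
   the longest prefix of a that is a prefix of every member of A *)
Definition lcp_of {G : eqType} (A : seq G -> Prop) (a : seq G) : seq G :=
  take (\max_(n < (size a).+1 | `[< forall b, A b -> prefix (take n a) b >]) n) a.

Section Fun.
Variables (S G : eqType) (f : seq S -> seq G).

Definition fleft (x : seq S) : seq G :=
  lcp_of (fun z => exists y, z = f (x ++ y)) (f x).

(* f^{->}_x(y), defined by f(xy) = f^{<-}(x) f^{->}_x(y) *)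
Definition fright (x : seq S) (y : seq S) : seq G :=
  drop (size (fleft x)) (f (x ++ y)).

Fixpoint run_rev (rx : seq S) : seq (S * seq G) :=
  match rx with
  | [::] => [::]
  | [:: a] => [:: (a, fleft [:: a])]
  | z :: ry => rcons (run_rev ry)
                 (z, drop (size (fleft (rev ry))) (fleft (rev (z :: ry))))
  end.

Definition run (x : seq S) : seq (S * seq G) := run_rev (rev x).
End Fun.

(* A tier on an alphabet A is given by the predicate of symbols kept on the
   tier; tau(x) = filter. The alphabet Sigma ∪ Gamma is the sum type S + G. *)
Definition tierS {S G : Type} (tau : pred (S + G)) (w : seq S) : seq S :=
  [seq a <- w | tau (inl a)].
Definition tierG {S G : Type} (tau : pred (S + G)) (u : seq G) : seq G :=
  [seq b <- u | tau (inr b)].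

Definition TIOSL {S G : eqType} (i j : nat) (tau : pred (S + G))
  (f : seq S -> seq G) : Prop :=
  forall w x : seq S,
    suff (i - 1) (tierS tau w) = suff (i - 1) (tierS tau x) ->
    suff (j - 1) (tierG tau (fleft f w)) = suff (j - 1) (tierG tau (fleft f x)) ->
    fright f w =1 fright f x.

Definition TISL {S G : eqType} (k : nat) tau (f : seq S -> seq G) := TIOSL k 1 tau f.
Definition TOSL {S G : eqType} (k : nat) tau (f : seq S -> seq G) := TIOSL 1 k tau f.

Definition TSSL {S G : eqType} (k : nat) (ups : pred (S * seq G))
  (f : seq S -> seq G) : Prop :=
  forall x y : seq S,
    suff (k - 1) [seq a <- run f x | ups a] = suff (k - 1) [seq a <- run f y | ups a] ->
    fright f x =1 fright f y.

From mathcomp Require Import all_boot.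
From mathcomp Require Import boolp zify.

Set Implicit Arguments.
Unset Strict Implicit.
Unset Printing Implicit Defensive.

(* The run of f on x pairs each input symbol with the piece of f^<-(x) emitted
   while reading it.  For a k-TISL function keep the actions whose input symbol
   is on the tier: their inputs spell the input tier.  For a k-TOSL function
   keep the actions whose output contains a tier symbol: their tier outputs
   concatenate to the tier of f^<-(x), and as each such piece is nonempty, the
   last k-1 kept actions determine the last k-1 tier symbols of the output. *)

Definition lastn {T : Type} (m : nat) (s : seq T) := drop (size s - m) s.

Section Lastn.
Variable T : Type.
Implicit Types (m : nat) (s t : seq T).

Lemma size_lastn m s : size (lastn m s) = minn m (size s).
Proof. rewrite /lastn size_drop; lia. Qed.

Lemma lastn0 s : lastn 0 s = [::].
Proof. by rewrite /lastn subn0 drop_size. Qed.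

Lemma lastn_eq_nil m s : 0 < m -> lastn m s = [::] -> s = [::].
Proof. by move=> m0 /(congr1 size); rewrite size_lastn; case: s => //= *; lia. Qed.

Lemma lastn_oversize m s : size s <= m -> lastn m s = s.
Proof. by move=> sm; rewrite /lastn (_ : size s - m = 0) ?drop0 //; lia. Qed.

Lemma lastn_cat m s t : m <= size t -> lastn m (s ++ t) = lastn m t.
Proof.
move=> mt; rewrite /lastn drop_cat size_cat.
by case: ltnP => ?; [lia | congr drop; lia].
Qed.

Lemma lastn_map (U : Type) (g : T -> U) m s : lastn m (map g s) = map g (lastn m s).
Proof. by rewrite /lastn size_map map_drop. Qed.

Lemma suffE m s : suff m s = nseq (m - size (lastn m s)) None ++ map Some (lastn m s).
Proof.
rewrite /suff /lastn drop_cat size_nseq size_drop.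
case: ltnP => h; last by rewrite map_drop (_ : m - _ = 0) //; lia.
by rewrite drop_nseq (_ : size s - m = 0) ?drop0; [congr (nseq _ _ ++ _) | ]; lia.
Qed.

Lemma suff0 s : suff 0 s = [::].
Proof. by rewrite suffE lastn0. Qed.

Lemma suff_eq_lastn m s t : suff m s = suff m t <-> lastn m s = lastn m t.
Proof.
have pmap_suff (u : seq T) : pmap id (suff m u) = lastn m u.
  rewrite suffE pmap_cat (map_pK (g := Some) (f := id)) //.
  by elim: (m - _).
by split=> [/(congr1 (pmap id))|E]; [rewrite !pmap_suff | rewrite !suffE E].
Qed.
End Lastn.

Section LastnFlatten.
Variable T : eqType.
Implicit Types (ss : seq (seq T)).

Lemma size_flatten_nonnil ss : [::] \notin ss -> size ss <= size (flatten ss).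
Proof.
elim: ss => [|[|a s] ss IH] //=; rewrite in_cons negb_or => /andP[_ /IH].
by rewrite size_cat /=; lia.
Qed.

Lemma lastn_flatten m ss1 ss2 : [::] \notin ss1 -> [::] \notin ss2 ->
  lastn m ss1 = lastn m ss2 -> lastn m (flatten ss1) = lastn m (flatten ss2).
Proof.
move=> nil1 nil2 E; have := congr1 size E; rewrite !size_lastn => Es.
case: (leqP m (size ss1)) => m1; last first.
  have ss2m : size ss2 <= m by lia.
  by move: E; rewrite (lastn_oversize (ltnW m1)) (lastn_oversize ss2m) => ->.
have lastn_flattenE ss : [::] \notin ss -> m <= size ss ->
    lastn m (flatten ss) = lastn m (flatten (lastn m ss)).
  move=> nil mss; rewrite -{1}(cat_take_drop (size ss - m) ss) flatten_cat.
  apply: lastn_cat; apply: leq_trans (size_flatten_nonnil _).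
    by rewrite size_lastn; lia.
  by apply: contra nil; apply: mem_drop.
have m2 : m <= size ss2 by lia.
by rewrite (lastn_flattenE ss1) // (lastn_flattenE ss2) // E.
Qed.

Lemma flatten_filter_nonnil ss : flatten [seq s <- ss | ~~ nilp s] = flatten ss.
Proof. by elim: ss => [|[|a s] ss IH] //=; rewrite IH. Qed.

Lemma prefix_filter (p : pred T) s t : prefix s t -> prefix (filter p s) (filter p t).
Proof. by move=> /prefixP[u ->]; rewrite filter_cat prefix_prefix. Qed.
End LastnFlatten.

Section Lcp.
Variable G : eqType.
Implicit Types (A : seq G -> Prop) (a b c : seq G).

Lemma lcp_of_prefix A a b : A b -> prefix (lcp_of A a) b.
Proof.
rewrite /lcp_of; elim/big_ind: _ => [|x y Hx Hy|i /asboolP]; last exact.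
  by rewrite take0 prefix0s.
by case: (leqP x y) => xy; rewrite ?(maxn_idPr xy) ?(maxn_idPl (ltnW xy)).
Qed.

Lemma lcp_of_max A a c :
  prefix c a -> (forall b, A b -> prefix c b) -> prefix c (lcp_of A a).
Proof.
move=> ca Ac; have ac : take (size c) a = c by apply/eqP; rewrite -prefixE.
have cP : `[< forall b, A b -> prefix (take (size c) a) b >] by apply/asboolP; rewrite ac.
have c_lt : size c < (size a).+1 by rewrite ltnS size_prefix.
have le_c := @leq_bigmax_cond _
  (fun i : 'I_(size a).+1 => `[< forall b, A b -> prefix (take i a) b >])
  (fun i => i : nat) (Ordinal c_lt) cP.
by rewrite prefixE /lcp_of take_takel // ac.
Qed.
End Lcp.

Section Run.
Variables (S G : eqType) (f : seq S -> seq G).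

Lemma fleft_prefix x y : prefix (fleft f x) (fleft f (x ++ y)).
Proof.
apply: lcp_of_max; first by apply: lcp_of_prefix; exists y.
by move=> _ [z ->]; apply: lcp_of_prefix; exists (y ++ z); rewrite catA.
Qed.

Lemma run_inputs x : map fst (run f x) = x.
Proof.
rewrite /run -[RHS]revK; elim: (rev x) => [|a [|b ry] IH] //.
by rewrite [run_rev _ _]/= map_rcons IH (rev_cons a (b :: ry)).
Qed.

Lemma run_outputs x : x != [::] -> flatten (map snd (run f x)) = fleft f x.
Proof.
rewrite -size_eq0 -size_rev size_eq0 /run -[in RHS](revK x).
elim: (rev x) => [|a [|b ry] IH] //= _; first by rewrite cats0.
rewrite map_rcons -cats1 flatten_cat IH //= cats0 (rev_cons a) -cats1.
by have /prefixP[s ->] := fleft_prefix (rev (b :: ry)) [:: a]; rewrite drop_size_cat.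
Qed.
End Run.

Section TierRun.
Variables (S G : eqType) (f : seq S -> seq G) (tau : pred (S + G)).

Definition input_on_tier (a : S * seq G) := tau (inl a.1).
Definition output_on_tier (a : S * seq G) := ~~ nilp (tierG tau a.2).

Lemma tierS_run x : tierS tau x = map fst [seq a <- run f x | input_on_tier a].
Proof. by rewrite /tierS -{1}(run_inputs f x) filter_map. Qed.

Lemma tierG_fleft_run x : x != [::] ->
  tierG tau (fleft f x) = flatten [seq tierG tau a.2 | a <- run f x & output_on_tier a].
Proof.
move=> x0; rewrite -run_outputs // /tierG filter_flatten -map_comp.
by rewrite -flatten_filter_nonnil filter_map.
Qed.

(* run f [::] is empty although fleft f [::] need not be; but fleft f [::] is a
   prefix of every fleft f z, so it has no tier symbol once some nonempty run
   has no output on the tier. *)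
Lemma lastn_tierG_fleft_nil m z :
  lastn m [seq a <- run f [::] | output_on_tier a] =
    lastn m [seq a <- run f z | output_on_tier a] ->
  lastn m (tierG tau (fleft f [::])) = lastn m (tierG tau (fleft f z)).
Proof.
have [-> _|m0] := posnP m; first by rewrite !lastn0.
have [-> //|z0] := eqVneq z [::].
move=> /esym /(lastn_eq_nil m0) no_tier_out.
have Tz : tierG tau (fleft f z) = [::] by rewrite tierG_fleft_run // no_tier_out.
have := prefix_filter (fun b => tau (inr b)) (fleft_prefix f [::] z).
by rewrite -!/(tierG _ _) Tz prefixs0 => /eqP ->.
Qed.

Lemma lastn_tierG_fleft m x y :
  lastn m [seq a <- run f x | output_on_tier a] =
    lastn m [seq a <- run f y | output_on_tier a] ->
  lastn m (tierG tau (fleft f x)) = lastn m (tierG tau (fleft f y)).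
Proof.
have [->|x0] := eqVneq x [::]; first exact: lastn_tierG_fleft_nil.
have [->|y0] := eqVneq y [::]; first by move=> /esym /lastn_tierG_fleft_nil.
have nonnil z : [::] \notin [seq tierG tau a.2 | a <- run f z & output_on_tier a].
  apply/mapP=> -[a]; rewrite mem_filter /output_on_tier => /andP[+ _] nil_tier.
  by rewrite -nil_tier.
move=> E; rewrite !tierG_fleft_run //; apply: lastn_flatten => //.
by rewrite !lastn_map E.
Qed.

Lemma TISL_TSSL k : TISL k tau f -> TSSL k input_on_tier f.
Proof.
move=> HT x y /suff_eq_lastn E; apply: HT; last by rewrite !suff0.
by apply/suff_eq_lastn; rewrite !tierS_run !lastn_map E.
Qed.

Lemma TOSL_TSSL k : TOSL k tau f -> TSSL k output_on_tier f.
Proof.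
move=> HT x y /suff_eq_lastn E; apply: HT; first by rewrite !suff0.
exact/suff_eq_lastn/lastn_tierG_fleft.
Qed.
End TierRun.

Theorem proposition17 (S G : finType) (k : nat) (f : seq S -> seq G)
  (tau : pred (S + G)) :
  0 < k ->
  (TISL k tau f -> exists ups : pred (S * seq G), TSSL k ups f) /\
  (TOSL k tau f -> exists phi : pred (S * seq G), TSSL k phi f).
Proof.
move=> _; split=> HT.
  by exists (input_on_tier tau); apply: TISL_TSSL.
by exists (output_on_tier tau); apply: TOSL_TSSL.
Qed.
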